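(* Consider the closed loop defined in the context: the plant $x(k+1)=Ax(k)+Bu(k)+w(k)$; at every planning instant $k=k_pM$ the planning problem $\mathcal{P}(x(k_pM))$ is solved, giving an optimal solution with mode $i^\star$ and first planned state/input $x_p^\star(k_p|k_p),u_p^\star(k_p|k_p)$, from which the reference $x_{\text{ref}}(k_pM+j)=A^jx_p^\star(k_p|k_p)+\sum_{m=0}^{j-1}A^mBu_p^\star(k_p|k_p)$, $j=0,\dots,M$, is generated; at every time $k\in\{k_pM,\dots,k_pM+M-1\}$ the lower-layer problem $\mathcal{L}(x(k),\{x_{\text{ref}}\},i^\star,k)$ is solved and $u(k)=v^\star(k|k)$ is applied. Suppose Assumptions (A1)–(A4) hold. If the planning problem $\mathcal{P}(x(0))$ is feasible, then along the closed loop the planning problems $\mathcal{P}(x(k_pM))$ and the lower-layer problems $\mathcal{L}(x(k),\{x_{\text{ref}}\},i^\star,k)$ remain feasible for all $k_p\ge0$ and all $k\ge0$.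
   Context: System: $x(k+1)=Ax(k)+Bu(k)+w(k)$, $y(k)=Cx(k)$, with $x(k)\in\mathbb{R}^n$, $u(k)\in\mathbb{R}^m$, $y(k)\in\mathbb{R}^p$, unknown disturbance $w(k)\in\mathbb{R}^n$, closed convex constraint sets $\mathbb{X}\subseteq\mathbb{R}^n$, $\mathbb{U}\subseteq\mathbb{R}^m$. Obstacles: for $\ell=1,\dots,H$, $\mathbb{O}_\ell=\{y\in\mathbb{R}^p:E_\ell y<f_\ell\}$ (componentwise), $E_\ell\in\mathbb{R}^{q_\ell\times p}$, each the interior of a compact convex polytope; $\mathbb{O}=\bigcup_\ell\mathbb{O}_\ell$. Notation: $\mathbb{X}\oplus\mathbb{Y}=\{x+y:x\in\mathbb{X},y\in\mathbb{Y}\}$, $\mathbb{X}\ominus\mathbb{Y}=\{x:\{x\}\oplus\mathbb{Y}\subseteq\mathbb{X}\}$, $G\mathbb{S}=\{Gs:s\in\mathbb{S}\}$; $\operatorname{rem}(k,M)$ is the remainder of $k$ divided by $M$; $\|x\|_Q^2=x^\top Qx$. Modes: $N_w$ modes; for each $i$, $\mathbb{X}_i\subseteq\mathbb{X}$, $\mathbb{U}_i\subseteq\mathbb{U}$ closed convex polytopes, $\mathbb{W}_i$ compact convex polytope. (A1): if $x(k)\in\mathbb{X}_i$ and $u(k)\in\mathbb{U}_i$ then $w(k)\in\mathbb{W}_i$. $K\in\mathbb{R}^{m\times n}$ with $A+BK$ Schur stable; $\mathbb{Z}_i$ compact convex polytopes with $(A+BK)\mathbb{Z}_i\oplus\mathbb{W}_i\subseteq\mathbb{Z}_i$;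 $\mathbb{E}_i(0)=\{0\}$, $\mathbb{E}_i(j+1)=(A+BK)\mathbb{E}_i(j)\oplus\mathbb{W}_i$. $M>1$ integer, $A_p=A^M$, $B_p=\sum_{i=0}^{M-1}A^iB$. (A2): $(A,B)$ and $(A_p,B_p)$ controllable. (A3) Inter-sample sets $\mathbb{I}_i\subseteq\mathbb{R}^n\times\mathbb{R}^m$: if $(x_p,u_p)\in\mathbb{I}_i$ then for $\ell=1,\dots,M-1$: $A^\ell x_p+\sum_{m=0}^{\ell-1}A^mBu_p\in\mathbb{X}_i\ominus\mathbb{Z}_i$ and $C(A^\ell x_p+\sum_{m=0}^{\ell-1}A^mBu_p)\notin\mathbb{O}\oplus(-C)\mathbb{Z}_i$. (A4) Terminal sets $\mathbb{X}^f_i$ and maps $\kappa^f_i$: $x_p\in\mathbb{X}^f_i$ implies $A_px_p+B_p\kappa^f_i(x_p)\in\mathbb{X}^f_i$, $x_p\in\mathbb{X}_i\ominus\mathbb{Z}_i$, $\kappa^f_i(x_p)\in\mathbb{U}_i\ominus K\mathbb{Z}_i$, $(x_p,\kappa^f_i(x_p))\in\mathbb{I}_i$, $Cx_p\notin\mathbb{O}\oplus(-C)\mathbb{Z}_i$. Planning problem $\mathcal{P}(\xi)$ at planning index $k_p$, $\xi=x(k_pM)$, horizon $N$, weights $\alpha_x,\alpha_u\ge0$, goal $x_{\text{goal}}$: minimize over $x_p(k_p+j|k_p)$ ($j=0,\dots,N$), $u_p(k_p+j|k_p)$ ($j=0,\dots,N-1$), $i$ the cost $\|x_{\text{goal}}-x_p(k_p+N|k_p)\|_\infty+\sum_{j=0}^{N-1}(\alpha_x\|x_p(k_p+j|k_p)\|_\infty+\alpha_u\|u_p(k_p+j|k_p)\|_\infty)$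 subject to $i\in\{1,\dots,N_w\}$, $\xi-x_p(k_p|k_p)\in\mathbb{Z}_i$, and for all $j\in\{0,\dots,N-1\}$: $x_p(k_p+j+1|k_p)=A_px_p(k_p+j|k_p)+B_pu_p(k_p+j|k_p)$, $x_p(k_p+j|k_p)\in\mathbb{X}_i\ominus\mathbb{Z}_i$, $u_p(k_p+j|k_p)\in\mathbb{U}_i\ominus K\mathbb{Z}_i$, $Cx_p(k_p+j|k_p)\notin\mathbb{O}\oplus(-C)\mathbb{Z}_i$, $(x_p(k_p+j|k_p),u_p(k_p+j|k_p))\in\mathbb{I}_i$; and $x_p(k_p+N|k_p)\in\mathbb{X}^f_i$. Lower-layer problem $\mathcal{L}(x(k),\{x_{\text{ref}}\},i,k)$: with $L_k=M-\operatorname{rem}(k,M)$, minimize over $z(k+j|k)$ ($j=0,\dots,L_k$), $v(k+j|k)$ ($j=0,\dots,L_k-1$) the cost $\sum_{j=k}^{k+L_k-1}(\|x_{\text{ref}}(j)-z(j|k)\|_Q^2+\|v(j|k)\|_R^2)+\|x_{\text{ref}}(k+L_k)-z(k+L_k|k)\|_P^2$ ($Q,P,R$ positive definite) subject to $z(k|k)=x(k)$, $z(k+j+1|k)=Az(k+j|k)+Bv(k+j|k)$, and for the relevant $j$: $z(k+j|k)\in\mathbb{X}_i\ominus\mathbb{E}_i(j)$, $v(k+j|k)\in\mathbb{U}_i\ominus K\mathbb{E}_i(j)$, $C(z(k+j|k)-x_{\text{ref}}(k+j))\in C(\mathbb{Z}_i\ominus\mathbb{E}_i(j))$, and $z(k+L_k|k)-x_{\text{ref}}(k+L_k)\in\mathbb{Z}_i\ominus\mathbb{E}_i(L_k)$.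 Its optimal input sequence is denoted $v^\star(\cdot|k)$. *)

From HB Require Import structures.
From mathcomp Require Import all_boot all_order all_algebra.
From mathcomp Require Import all_classical all_reals all_analysis.
From mathcomp Require Import complex.
Set Implicit Arguments. Unset Strict Implicit. Unset Printing Implicit Defensive.
Import Order.TTheory GRing.Theory Num.Theory.
Local Open Scope ring_scope.
Local Open Scope classical_set_scope.

Section Defs.
Variable R : realType.

(* Subsets of R^n (column vectors). [R^o] only selects the canonical
   topology on matrices; 'cV[R^o]_n and 'cV[R]_n are convertible. *)
Definition vset (n : nat) := set 'cV[R^o]_n.

Definition msum n (S T : vset n) : vset n :=
  [set z | exists x y, S x /\ T y /\ z = x + y].
Definition pdiff n (S T : vset n) : vset n :=
  [set x | forall y, T y -> S (x + y)].
Definition limg n k (G : 'M[R]_(k, n)) (S : vset n) : vset k :=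
  [set z | exists s : 'cV[R]_n, S s /\ z = G *m s].

Definition convex_set n (S : vset n) :=
  forall x y : 'cV[R]_n, S x -> S y ->
  forall t : R, 0 <= t <= 1 -> S (t *: x + (1 - t) *: y).

Definition polytope n (S : vset n) :=
  exists (q : nat) (F : 'M[R]_(q, n)) (g : 'cV[R]_q),
    forall x : 'cV[R]_n, S x <-> (forall j : 'I_q, (F *m x) j 0 <= g j 0).

Definition obst p q (E : 'M[R]_(q, p)) (f : 'cV[R]_q) : vset p :=
  [set y | forall j : 'I_q, (E *m y) j 0 < f j 0].

Definition schur_stable n (A : 'M[R]_n) :=
  forall l : R[i], root (char_poly (map_mx (real_complex R) A)) l -> `|l| < 1.

Definition controllable n m (A : 'M[R]_n) (B : 'M[R]_(n, m)) :=
  \rank (\mxrow_(k < n) (A ^+ k *m B)) = n.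

Definition posdef n (Q : 'M[R]_n) :=
  Q^T = Q /\ forall v : 'cV[R]_n, v != 0 -> 0 < (v^T *m Q *m v) 0 0.

Definition qnorm n (Q : 'M[R]_n) (v : 'cV[R]_n) : R := (v^T *m Q *m v) 0 0.

Definition ninf n (v : 'cV[R]_n) : R := \big[Num.max/0]_(j < n) `|v j 0|.

Definition propagate n m (A : 'M[R]_n) (B : 'M[R]_(n, m))
  (x : 'cV[R]_n) (u : 'cV[R]_m) (l : nat) : 'cV[R]_n :=
  A ^+ l *m x + \sum_(j < l) (A ^+ j *m B *m u).

Fixpoint Eset n (Acl : 'M[R]_n) (W : vset n) (j : nat) : vset n :=
  match j with
  | 0 => [set 0]
  | j'.+1 => msum (limg Acl (Eset Acl W j')) W
  end.

End Defs.

Unset Implicit Arguments.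
Record data (R : realType) := Data {
  dn : nat; dm : nat; dp : nat;
  dA : 'M[R]_dn; dB : 'M[R]_(dn, dm); dC : 'M[R]_(dp, dn);
  dX : vset R dn; dU : vset R dm;
  (* obstacles O_l = {y : E_l y < f_l}, l in 'I_H *)
  dH : nat; dq : 'I_dH -> nat;
  dE : forall l : 'I_dH, 'M[R]_(dq l, dp);
  df : forall l : 'I_dH, 'cV[R]_(dq l);
  dNw : nat;
  dXs : 'I_dNw -> vset R dn; dUs : 'I_dNw -> vset R dm;
  dWs : 'I_dNw -> vset R dn;
  dK : 'M[R]_(dm, dn); dZs : 'I_dNw -> vset R dn;
  dM : nat;
  dIs : 'I_dNw -> set ('cV[R]_dn * 'cV[R]_dm);
  dXf : 'I_dNw -> vset R dn; dkf : 'I_dNw -> 'cV[R]_dn -> 'cV[R]_dm;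
  dN : nat; dax : R; dau : R; dxgoal : 'cV[R]_dn;
  dQ : 'M[R]_dn; dP : 'M[R]_dn; dR : 'M[R]_dm
}.

Arguments dn {R}. Arguments dm {R}. Arguments dp {R}. Arguments dA {R}. Arguments dB {R}.
Arguments dC {R}. Arguments dX {R}. Arguments dU {R}. Arguments dH {R}. Arguments dq {R}.
Arguments dE {R}. Arguments df {R}. Arguments dNw {R}. Arguments dXs {R}. Arguments dUs {R}.
Arguments dWs {R}. Arguments dK {R}. Arguments dZs {R}. Arguments dM {R}. Arguments dIs {R}.
Arguments dXf {R}. Arguments dkf {R}. Arguments dN {R}. Arguments dax {R}. Arguments dau {R}.
Arguments dxgoal {R}. Arguments dQ {R}. Arguments dP {R}. Arguments dR {R}.
Set Implicit Arguments.

Unset Implicit Arguments.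
Section Problem.
Context {R : realType} (D : data R).

Local Notation n := (dn D). Local Notation m := (dm D).
Local Notation A := (dA D). Local Notation B := (dB D). Local Notation C := (dC D).
Local Notation M := (dM D).

Definition Acl : 'M[R]_n := A + B *m dK D.
Definition Ap : 'M[R]_n := A ^+ M.
Definition Bp : 'M[R]_(n, m) := \sum_(j < M) (A ^+ j *m B).

Definition Obs : vset R (dp D) := [set y | exists l, obst (dE D l) (df D l) y].

Definition Obs_Z (i : 'I_(dNw D)) : vset R (dp D) := msum Obs (limg (- C) (dZs D i)).

Definition Es (i : 'I_(dNw D)) (j : nat) : vset R n := Eset Acl (dWs D i) j.

Definition standing :=
  (closed (dX D) /\ convex_set (dX D)) /\
  (closed (dU D) /\ convex_set (dU D)) /\
  (forall l, exists Pl : vset R (dp D),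
      polytope Pl /\ compact Pl /\ obst (dE D l) (df D l) = Pl°) /\
  (forall i, dXs D i `<=` dX D /\ closed (dXs D i) /\ polytope (dXs D i)) /\
  (forall i, dUs D i `<=` dU D /\ closed (dUs D i) /\ polytope (dUs D i)) /\
  (forall i, compact (dWs D i) /\ polytope (dWs D i)) /\
  schur_stable Acl /\
  (forall i, [/\ compact (dZs D i), polytope (dZs D i) &
                msum (limg Acl (dZs D i)) (dWs D i) `<=` dZs D i]) /\
  (1 < M)%N /\ (0 < dN D)%N /\ 0 <= dax D /\ 0 <= dau D /\
  posdef (dQ D) /\ posdef (dP D) /\ posdef (dR D).

Definition A2 := controllable A B /\ controllable Ap Bp.

Definition A3 :=
  forall i xp up, dIs D i (xp, up) ->
  forall l : nat, (1 <= l <= M - 1)%N ->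
    pdiff (dXs D i) (dZs D i) (propagate A B xp up l) /\
    ~ Obs_Z i (C *m propagate A B xp up l).

Definition A4 :=
  forall i xp, dXf D i xp ->
    [/\ dXf D i (Ap *m xp + Bp *m dkf D i xp),
        pdiff (dXs D i) (dZs D i) xp,
        pdiff (dUs D i) (limg (dK D) (dZs D i)) (dkf D i xp),
        dIs D i (xp, dkf D i xp) &
        ~ Obs_Z i (C *m xp)].

(* xs j stands for x_p(k_p+j|k_p) (j = 0..N), us j for u_p(k_p+j|k_p) (j < N) *)
Definition plan_constr (xi : 'cV[R]_n) (i : 'I_(dNw D))
    (xs : nat -> 'cV[R]_n) (us : nat -> 'cV[R]_m) :=
  dZs D i (xi - xs 0%N) /\
  (forall j, (j < dN D)%N ->
     [/\ xs j.+1 = Ap *m xs j + Bp *m us j,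
         pdiff (dXs D i) (dZs D i) (xs j),
         pdiff (dUs D i) (limg (dK D) (dZs D i)) (us j),
         ~ Obs_Z i (C *m xs j) &
         dIs D i (xs j, us j)]) /\
  dXf D i (xs (dN D)).

Definition plan_cost (xs : nat -> 'cV[R]_n) (us : nat -> 'cV[R]_m) : R :=
  ninf (dxgoal D - xs (dN D)) +
  \sum_(j < dN D) (dax D * ninf (xs j) + dau D * ninf (us j)).

Definition plan_feasible (xi : 'cV[R]_n) :=
  exists i xs us, plan_constr xi i xs us.

Definition plan_optimal (xi : 'cV[R]_n) i xs us :=
  plan_constr xi i xs us /\
  forall i' xs' us', plan_constr xi i' xs' us' -> plan_cost xs us <= plan_cost xs' us'.

(* xref is indexed by absolute time; zs j stands for z(k+j|k), vs j for v(k+j|k) *)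
Definition Lk (k : nat) : nat := (M - k %% M)%N.

Definition lower_constr (x : 'cV[R]_n) (xref : nat -> 'cV[R]_n)
    (i : 'I_(dNw D)) (k : nat) (zs : nat -> 'cV[R]_n) (vs : nat -> 'cV[R]_m) :=
  zs 0%N = x /\
  (forall j, (j < Lk k)%N ->
     [/\ zs j.+1 = A *m zs j + B *m vs j,
         pdiff (dXs D i) (Es i j) (zs j),
         pdiff (dUs D i) (limg (dK D) (Es i j)) (vs j) &
         limg C (pdiff (dZs D i) (Es i j)) (C *m (zs j - xref (k + j)%N))]) /\
  pdiff (dZs D i) (Es i (Lk k)) (zs (Lk k) - xref (k + Lk k)%N).

Definition lower_cost (xref : nat -> 'cV[R]_n) (k : nat)
    (zs : nat -> 'cV[R]_n) (vs : nat -> 'cV[R]_m) : R :=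
  \sum_(j < Lk k) (qnorm (dQ D) (xref (k + j)%N - zs j) + qnorm (dR D) (vs j)) +
  qnorm (dP D) (xref (k + Lk k)%N - zs (Lk k)).

Definition lower_feasible x xref i k := exists zs vs, lower_constr x xref i k zs vs.

Definition lower_optimal x xref i k zs vs :=
  lower_constr x xref i k zs vs /\
  forall zs' vs', lower_constr x xref i k zs' vs' ->
    lower_cost xref k zs vs <= lower_cost xref k zs' vs'.

Definition xref_of (kp : nat) (x0 : 'cV[R]_n) (u0 : 'cV[R]_m) : nat -> 'cV[R]_n :=
  fun t => propagate A B x0 u0 (t - kp * M)%N.

End Problem.

From Pilot Require Import Defs.

(* Recursive feasibility follows the tube-MPC argument on both layers.
   Inside a planning period, a feasible lower-layer solution (z, v) at time k
   yields one at time k+1: drop its first step and add the propagated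
   disturbance A_cl^j w(k), which is admissible because
   A_cl^j W_i (+) E_i(j) is contained in E_i(j+1); the first-step constraints
   put x(k) in X_i and u(k) in U_i, so (A1) does give w(k) in W_i.
   At a planning instant the error e = x - x_p lies in Z_i, and the reference
   shifted by A_cl^j e, with input u_p + K A_cl^j e, is feasible because
   A_cl^j Z_i (+) E_i(j) is contained in Z_i (robust invariance of Z_i) and
   (A3) keeps the reference in X_i (-) Z_i between samples.  At the end of
   the period the terminal constraint of the lower layer puts
   x((k_p+1)M) - x_p(k_p+1|k_p) in Z_i, so the plan shifted by one step and
   completed by the terminal controller is feasible for P by (A4). *)

From HB Require Import structures.
From mathcomp Require Import all_boot all_order all_algebra.
From mathcomp Require Import all_classical all_reals all_analysis.
From mathcomp Require Import complex zify.
Import Order.TTheory GRing.Theory Num.Theory.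
Set Implicit Arguments.
Local Open Scope ring_scope.
Local Open Scope classical_set_scope.
Local Notation limg := Defs.limg.
Local Notation msum := Defs.msum.

Lemma divn_mulDl_small q {d r} : (r < d)%N -> ((q * d + r) %/ d)%N = q.
Proof. by move=> lt_rd; rewrite divnMDl ?divn_small ?addn0 //; lia. Qed.

Section PontryaginDifference.
Variables (R : realType) (n : nat).
Implicit Types (S T U : vset R n) (x a : 'cV[R]_n).

Lemma pdiff_add S T U x a : pdiff S T x -> pdiff T U a -> pdiff S U (x + a).
Proof. by move=> Sx Ta y /Ta /Sx; rewrite addrA. Qed.

Lemma pdiff_mem0 S T x : pdiff S T x -> T 0 -> S x.
Proof. by move=> /[swap] T0 /(_ 0 T0); rewrite addr0. Qed.

Lemma pdiff_limg k (G : 'M[R]_(k, n)) S T a :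
  pdiff S T a -> pdiff (limg G S) (limg G T) (G *m a).
Proof.
by move=> Ta _ [s [Ts ->]]; exists (a + s); split; [exact: Ta | rewrite mulmxDr].
Qed.

Lemma limg_mem0 k (G : 'M[R]_(k, n)) S : S 0 -> limg G S 0.
Proof. by exists 0; rewrite mulmx0. Qed.

End PontryaginDifference.

Section ErrorSets.
Context {R : realType} {n : nat} {Acl : 'M[R]_n} {W : vset R n}.
Local Notation E := (Eset Acl W).

Lemma Eset_pdiff_succ j {w} : W w -> pdiff (E j.+1) (E j) (Acl ^+ j *m w).
Proof.
move=> Ww; elim: j => [|j IH] y.
  move=> /= ->; exists 0, w; split; first exact: limg_mem0.
  by split => //; rewrite expr0 mul1mx addr0 add0r.
move=> [_ [w' [[s [Es ->]] [Ww' ->]]]].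
exists (Acl *m (Acl ^+ j *m w + s)), w'; split.
  by exists (Acl ^+ j *m w + s); split => //; exact: IH.
by split => //; rewrite exprS -mulmxE -mulmxA mulmxDr addrA.
Qed.

Lemma rpi_pdiff_Eset (Z : vset R n) j {e} :
  msum (limg Acl Z) W `<=` Z -> Z e -> pdiff Z (E j) (Acl ^+ j *m e).
Proof.
move=> rpiZ; elim: j e => [|j IH] e Ze y.
  by move=> /= ->; rewrite expr0 mul1mx addr0.
move=> [_ [w [[s [Es ->]] [Ww ->]]]]; apply: rpiZ.
exists (Acl *m (Acl ^+ j *m e + s)), w; split.
  by exists (Acl ^+ j *m e + s); split => //; exact: IH.
by split => //; rewrite exprS -mulmxE -mulmxA mulmxDr addrA.
Qed.

End ErrorSets.

Section Propagation.
Variables (R : realType) (n m : nat) (A : 'M[R]_n) (B : 'M[R]_(n, m)).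

Lemma propagate0 x u : propagate A B x u 0 = x.
Proof. by rewrite /propagate big_ord0 expr0 mul1mx addr0. Qed.

Lemma propagateS x u j :
  propagate A B x u j.+1 = A *m propagate A B x u j + B *m u.
Proof.
rewrite /propagate big_ord_recl expr0 mul1mx mulmxDr mulmx_sumr exprS -mulmxE.
rewrite mulmxA [B *m u + _]addrC addrA; congr (_ + _ + _).
by apply: eq_bigr => i _; rewrite lift0 exprS -mulmxE !mulmxA.
Qed.

Lemma closed_loop_stepE (K : 'M[R]_(m, n)) (p a : 'cV[R]_n) (v : 'cV[R]_m) :
  A *m p + B *m v + (A + B *m K) *m a = A *m (p + a) + B *m (v + K *m a).
Proof. by rewrite mulmxDl !mulmxDr mulmxA addrACA. Qed.

End Propagation.

Section Layers.
Variables (R : realType) (D : data R).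
Local Notation A := (dA D).
Local Notation B := (dB D).
Local Notation K := (dK D).
Local Notation M := (dM D).
Local Notation N := (dN D).
Local Notation Xs := (dXs D).
Local Notation Us := (dUs D).
Local Notation Ws := (dWs D).
Local Notation Zs := (dZs D).

Lemma propagate_period x u : propagate A B x u M = Ap D *m x + Bp D *m u.
Proof. by rewrite /propagate mulmx_suml. Qed.

Lemma xref_ofE kp x u j : xref_of D kp x u (kp * M + j) = propagate A B x u j.
Proof. by rewrite /xref_of addKn. Qed.

Lemma Lk_block kp r : (r < M)%N -> Lk D (kp * M + r) = (M - r)%N.
Proof. by move=> lt_rM; rewrite /Lk modnMDl modn_small. Qed.

Lemma lower_feasible_start i xi xs us kp :
  msum (limg (Acl D) (Zs i)) (Ws i) `<=` Zs i -> A3 D -> (0 < N)%N ->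
  plan_constr D xi i xs us ->
  lower_feasible D xi (xref_of D kp (xs 0%N) (us 0%N)) i (kp * M).
Proof.
move=> rpiZ HA3 N_gt0 [Ze [Hplan _]].
have [_ Xx0 Uu0 _ Iu0] := Hplan 0%N N_gt0.
set e := xi - xs 0%N; set p := propagate A B (xs 0%N) (us 0%N).
have Xp j : (j < M)%N -> pdiff (Xs i) (Zs i) (p j).
  case: j => [|j] lt_jM; first by rewrite /p propagate0.
  by have [] := HA3 i _ _ Iu0 j.+1; rewrite //=; lia.
have tube j : pdiff (Zs i) (Es D i j) (Acl D ^+ j *m e) :=
  rpi_pdiff_Eset j rpiZ Ze.
have LkE : Lk D (kp * M) = M by rewrite /Lk modnMl subn0.
exists (fun j => p j + Acl D ^+ j *m e).
exists (fun j => us 0%N + K *m (Acl D ^+ j *m e)).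
rewrite /lower_constr LkE /=; split; [|split].
- by rewrite /p propagate0 expr0 mul1mx addrC subrK.
- move=> j lt_jM; split.
  + by rewrite /p propagateS exprS -mulmxE -mulmxA /Acl closed_loop_stepE.
  + exact: pdiff_add (Xp j lt_jM) (tube j).
  + exact: pdiff_add Uu0 (pdiff_limg (tube j)).
  + by exists (Acl D ^+ j *m e); rewrite xref_ofE addrAC subrr add0r.
- by rewrite xref_ofE addrAC subrr add0r.
Qed.

Lemma lower_constr_admissible x0 xref i k zs vs :
  (0 < Lk D k)%N -> lower_constr D x0 xref i k zs vs ->
  Xs i x0 /\ Us i (vs 0%N).
Proof.
move=> Lk_gt0 [<- [Hlow _]]; have [_ Xz0 Uv0 _] := Hlow 0%N Lk_gt0.
split; first exact: pdiff_mem0 Xz0 erefl.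
by apply: (pdiff_mem0 Uv0); apply: limg_mem0.
Qed.

Lemma lower_constr_terminal x0 xref i k zs vs {w} :
  Lk D k = 1%N -> lower_constr D x0 xref i k zs vs -> Ws i w ->
  Zs i (A *m x0 + B *m vs 0%N + w - xref (k + 1)%N).
Proof.
move=> Lk1 [<- [Hlow Hterm]] Ww; rewrite Lk1 in Hlow Hterm.
have [<- _ _ _] := Hlow 0%N erefl.
have := pdiff_mem0 (pdiff_add Hterm (Eset_pdiff_succ 0 Ww)) erefl.
by rewrite expr0 mul1mx addrAC.
Qed.

Lemma lower_feasible_succ x0 xref i k zs vs {w} L :
  Lk D k = L.+1 -> Lk D k.+1 = L ->
  lower_constr D x0 xref i k zs vs -> Ws i w ->
  lower_feasible D (A *m x0 + B *m vs 0%N + w) xref i k.+1.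
Proof.
move=> LkE LkSE [<- [Hlow Hterm]] Ww; rewrite LkE in Hlow Hterm.
have shift j : pdiff (Es D i j.+1) (Es D i j) (Acl D ^+ j *m w) :=
  Eset_pdiff_succ j Ww.
exists (fun j => zs j.+1 + Acl D ^+ j *m w).
exists (fun j => vs j.+1 + K *m (Acl D ^+ j *m w)).
rewrite /lower_constr LkSE /=; split; [|split].
- by have [-> _ _ _] := Hlow 0%N erefl; rewrite expr0 mul1mx.
- move=> j lt_jL; have [zsS Xz Uv [s [Cs Cz]]] := Hlow j.+1 lt_jL; split.
  + by rewrite zsS exprS -mulmxE -mulmxA /Acl closed_loop_stepE.
  + exact: pdiff_add Xz (shift j).
  + exact: pdiff_add Uv (pdiff_limg (shift j)).
  + exists (s + Acl D ^+ j *m w); split; first exact: pdiff_add Cs (shift j).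
    by rewrite addSnnS addrAC mulmxDr Cz mulmxDr.
- by rewrite addSnnS addrAC; exact: pdiff_add Hterm (shift L).
Qed.

Lemma plan_feasible_shift xi {xi'} i xs us :
  A4 D -> (0 < N)%N -> plan_constr D xi i xs us -> Zs i (xi' - xs 1%N) ->
  plan_feasible D xi'.
Proof.
move=> HA4 N_gt0 [_ [Hplan Hfin]] Ze.
have [Xf_next XN UN IN ON] := HA4 i _ Hfin.
exists i, (fun j => if (j < N)%N then xs j.+1
                    else Ap D *m xs N + Bp D *m dkf D i (xs N)).
exists (fun j => if (j.+1 < N)%N then us j.+1 else dkf D i (xs N)).
split; [by rewrite /= N_gt0 | split; last by rewrite /= ltnn].
move=> j lt_jN; rewrite /= lt_jN; case: (ltnP j.+1 N) => [lt_SjN | le_NSj].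
  by have [] := Hplan j.+1 lt_SjN.
have -> : j.+1 = N by apply/eqP; rewrite eqn_leq le_NSj andbT.
by split.
Qed.

End Layers.

Section ClosedLoop.
Variables (R : realType) (D : data R).
Local Notation A := (dA D).
Local Notation B := (dB D).
Local Notation M := (dM D).
Local Notation N := (dN D).

Hypotheses (HA3 : A3 D) (HA4 : A4 D).
Hypothesis rpiZ : forall i, msum (limg (Acl D) (dZs D i)) (dWs D i) `<=` dZs D i.
Hypotheses (M_gt1 : (1 < M)%N) (N_gt0 : (0 < N)%N).

Variables (x w : nat -> 'cV[R]_(dn D)) (u : nat -> 'cV[R]_(dm D)).
Variables (istar : nat -> 'I_(dNw D)).
Variables (xp : nat -> nat -> 'cV[R]_(dn D)) (up : nat -> nat -> 'cV[R]_(dm D)).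
Variables (zs : nat -> nat -> 'cV[R]_(dn D)) (vs : nat -> nat -> 'cV[R]_(dm D)).
Local Notation xref kp := (xref_of D kp (xp kp 0%N) (up kp 0%N)).

Hypothesis plant : forall k, x k.+1 = A *m x k + B *m u k + w k.
Hypothesis A1 : forall k i, dXs D i (x k) -> dUs D i (u k) -> dWs D i (w k).
Hypothesis plan_opt : forall kp, plan_feasible D (x (kp * M)%N) ->
  plan_optimal D (x (kp * M)%N) (istar kp) (xp kp) (up kp).
Hypothesis lower_opt : forall k, let kp := (k %/ M)%N in
  lower_feasible D (x k) (xref kp) (istar kp) k ->
  lower_optimal D (x k) (xref kp) (istar kp) k (zs k) (vs k) /\ u k = vs k 0%N.

Lemma closed_loop_step k kp : (k %/ M)%N = kp ->
  lower_feasible D (x k) (xref kp) (istar kp) k ->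
  [/\ lower_constr D (x k) (xref kp) (istar kp) k (zs k) (vs k),
      x k.+1 = A *m x k + B *m vs k 0%N + w k &
      dWs D (istar kp) (w k)].
Proof.
move=> <- feas; have [[Hlow _] u_vs] := lower_opt feas.
have Lk_gt0 : (0 < Lk D k)%N by rewrite /Lk subn_gt0 ltn_pmod //; lia.
have [Xx Uv] := lower_constr_admissible Lk_gt0 Hlow.
by split => //; [rewrite plant u_vs | apply: A1; rewrite ?u_vs].
Qed.

Lemma lower_feasible_block kp r : plan_feasible D (x (kp * M)%N) -> (r < M)%N ->
  lower_feasible D (x (kp * M + r)%N) (xref kp) (istar kp) (kp * M + r).
Proof.
move=> /plan_opt [Hplan _]; elim: r => [|r IH] lt_rM.
  by rewrite addn0; exact: lower_feasible_start (rpiZ _) HA3 N_gt0 Hplan.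
have lt_r'M : (r < M)%N by exact: ltnW.
have [Hlow xS Ww] := closed_loop_step (divn_mulDl_small kp lt_r'M) (IH lt_r'M).
rewrite addnS xS; apply: (lower_feasible_succ _ _ Hlow Ww).
  by rewrite Lk_block // -subnSK.
by rewrite -addnS Lk_block.
Qed.

Lemma plan_feasible_succ kp :
  plan_feasible D (x (kp * M)%N) -> plan_feasible D (x (kp.+1 * M)%N).
Proof.
move=> feas; have [Hplan _] := plan_opt kp feas.
have lt_M1M : (M.-1 < M)%N by rewrite ltn_predL; lia.
have [Hlow xS Ww] :=
  closed_loop_step (divn_mulDl_small kp lt_M1M)
                   (lower_feasible_block kp M.-1 feas lt_M1M).
have Lk1 : Lk D (kp * M + M.-1) = 1%N by rewrite Lk_block //; lia.
have next_ref : xref kp (kp * M + M.-1 + 1)%N = xp kp 1%N.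
  rewrite -addnA addn1 prednK; last by lia.
  by rewrite xref_ofE propagate_period; have [->] := Hplan.2.1 0%N N_gt0.
have next_k : (kp * M + M.-1).+1 = (kp.+1 * M)%N by rewrite mulSn; lia.
apply: (plan_feasible_shift HA4 N_gt0 Hplan).
by have := lower_constr_terminal Lk1 Hlow Ww; rewrite next_ref -xS next_k.
Qed.

Lemma closed_loop_feasible : plan_feasible D (x 0%N) ->
  (forall kp, plan_feasible D (x (kp * M)%N)) /\
  (forall k, let kp := (k %/ M)%N in
     lower_feasible D (x k) (xref kp) (istar kp) k).
Proof.
move=> feas0; have plan_all kp : plan_feasible D (x (kp * M)%N).
  by elim: kp => [|kp IH]; [rewrite mul0n | exact: plan_feasible_succ].
split=> // k /=; have M_gt0 : (0 < M)%N by lia.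
have := lower_feasible_block (k %/ M) (k %% M) (plan_all _) (ltn_pmod k M_gt0).
by rewrite -divn_eq.
Qed.

End ClosedLoop.

Unset Implicit Arguments.
Theorem proposition3 (R : realType) (D : data R) :
  standing D -> A2 D -> A3 D -> A4 D ->
  forall (x w : nat -> 'cV[R]_(dn D)) (u : nat -> 'cV[R]_(dm D))
         (istar : nat -> 'I_(dNw D))
         (xp : nat -> nat -> 'cV[R]_(dn D)) (up : nat -> nat -> 'cV[R]_(dm D))
         (zs : nat -> nat -> 'cV[R]_(dn D)) (vs : nat -> nat -> 'cV[R]_(dm D)),
  (* plant *)
  (forall k, x k.+1 = dA D *m x k + dB D *m u k + w k) ->
  (* (A1) along the closed loop *)
  (forall k (i : 'I_(dNw D)), dXs D i (x k) -> dUs D i (u k) -> dWs D i (w k)) ->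
  (* planning layer: at k = k_p M an optimal solution of P(x(k_p M)) is used *)
  (forall kp, plan_feasible D (x (kp * dM D)%N) ->
     plan_optimal D (x (kp * dM D)%N) (istar kp) (xp kp) (up kp)) ->
  (* lower layer: at each k an optimal solution of L(x(k),{x_ref},i*,k) is used
     and u(k) = v*(k|k) *)
  (forall k, let kp := (k %/ dM D)%N in
     let xref := xref_of D kp (xp kp 0%N) (up kp 0%N) in
     lower_feasible D (x k) xref (istar kp) k ->
     lower_optimal D (x k) xref (istar kp) k (zs k) (vs k) /\ u k = vs k 0%N) ->
  (* P(x(0)) feasible *)
  plan_feasible D (x 0%N) ->
  (forall kp, plan_feasible D (x (kp * dM D)%N)) /\
  (forall k, let kp := (k %/ dM D)%N in
     lower_feasible D (x k) (xref_of D kp (xp kp 0%N) (up kp 0%N)) (istar kp) k).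
Proof.
move=> [_ [_ [_ [_ [_ [_ [_ [HZ [M_gt1 [N_gt0 _]]]]]]]]]] _ HA3 HA4.
have rpiZ i : msum (limg (Acl D) (dZs D i)) (dWs D i) `<=` dZs D i.
  by case: (HZ i).
move=> x w u istar xp up zs vs plant A1 plan_opt lower_opt.
exact: (closed_loop_feasible HA3 HA4 rpiZ M_gt1 N_gt0 x w u istar xp up zs vs
          plant A1 plan_opt lower_opt).
Qed.
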